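(* Under the standing setup below, for each $i\in\{1,2\}$, every connected component of the graph obtained from $G_i$ by deleting all vertices of $p_i$ is adjacent to exactly two vertices of $p_i$.
   Context: A biconnected graph is series-parallel if it contains no subdivision of $K_4$. A separation pair of a biconnected graph $G$ is a pair $(s,t)$ with $G-s-t$ disconnected; a transitive edge is an edge joining the two vertices of a separation pair. A component w.r.t. $(s,t)$ is the subgraph induced by $s$, $t$ and the vertex set of one connected component of $G-s-t$; vertices other than $s,t$ are internal. A component is heavy if it has an internal vertex adjacent to neither $s$ nor $t$. Standing setup: $G$ is a biconnected series-parallel graph without transitive edges such that every separation pair has at most two heavy components, and $G$ has at least one separation pair. $(s,t)$ is a separation pair of $G$ whose number $k$ of heavy components is maximum over all separation pairs. $G_1$ and $G_2$ are two distinct components w.r.t. $(s,t)$, chosen so that $G_1$ is heavy if $k\ge 1$ and $G_2$ is heavy if $k=2$. For $i\in\{1,2\}$, $p_i$ is a longest $s$–$t$ path in $G_i$. *)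

(* A finite simple graph is a symmetric irreflexive
   relation e on a finType T (vertex set = all of T). *)
From mathcomp Require Import all_boot.
Set Implicit Arguments. Unset Strict Implicit. Unset Printing Implicit Defensive.

Section Graphs.
Variables (T : finType) (e : rel T).

Definition simple_graph : Prop := symmetric e /\ irreflexive e.

Definition induced (S : {set T}) : rel T :=
  fun a b => [&& a \in S, b \in S & e a b].

Definition connected_set (S : {set T}) : Prop :=
  forall x y, x \in S -> y \in S -> connect (induced S) x y.

Definition compo (S : {set T}) (x : T) : {set T} :=
  [set y in S | connect (induced S) x y].

Definition components (S : {set T}) : {set {set T}} :=
  [set compo S x | x in S].

Definition biconnected : Prop :=
  2 < #|T| /\ connected_set setT /\ forall v, connected_set (~: [set v]).

(* a simple path from x to y with internal vertex list q:
   the walk is x :: rcons q y *)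
Definition simple_path_int (x y : T) (q : seq T) : bool :=
  path e x (rcons q y) && uniq (x :: rcons q y).

Definition has_K4_subdivision : Prop :=
  exists (f : 'I_4 -> T) (P : 'I_4 -> 'I_4 -> seq T),
    injective f /\
    (forall i j : 'I_4, i < j -> simple_path_int (f i) (f j) (P i j)) /\
    (forall (i j : 'I_4) (k : 'I_4), i < j -> f k \notin P i j) /\
    (forall i j i' j' : 'I_4, i < j -> i' < j' -> (i, j) <> (i', j') ->
        forall v, v \in P i j -> v \notin P i' j').

Definition series_parallel : Prop := biconnected /\ ~ has_K4_subdivision.

Definition separation_pair (s t : T) : Prop :=
  s != t /\ ~ connected_set (~: [set s; t]).

Definition no_transitive_edges : Prop :=
  forall s t, separation_pair s t -> ~~ e s t.

(* components w.r.t. (s,t) are given by their sets D of internal vertices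
   (D ranging over components (~: [set s; t])) *)
Definition heavy (s t : T) (D : {set T}) : bool :=
  [exists v in D, ~~ e v s && ~~ e v t].

Definition nheavy (s t : T) : nat :=
  #|[set D in components (~: [set s; t]) | heavy s t D]|.

(* q is an s-t path in the component with internal vertices D:
   the walk s :: q is a simple path ending at t, inside D ∪ {s,t} *)
Definition st_path_in (s t : T) (D : {set T}) (q : seq T) : bool :=
  [&& path (induced (D :|: [set s; t])) s q, last s q == t & uniq (s :: q)].

Definition longest_st_path (s t : T) (D : {set T}) (q : seq T) : Prop :=
  st_path_in s t D q /\
  forall q', st_path_in s t D q' -> size q' <= size q.

Definition attach_two (s : T) (D : {set T}) (q : seq T) : Prop :=
  forall X, X \in components (D :\: [set x | x \in s :: q]) ->
    #|[set v | (v \in s :: q) && [exists u in X, e u v]]| = 2.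

End Graphs.

From mathcomp Require Import all_boot.
Set Implicit Arguments. Unset Strict Implicit. Unset Printing Implicit Defensive.

(* Let X be a component of C - V(p); its attachments are the vertices of p
   adjacent to X.  There are at least two: if v were the only one, v would
   separate X from the end of p different from v, against biconnectivity.
   There are at most two: attachments a, b, c in this order along p, closed up
   by an s-t path through a second component, lie on a cycle avoiding X, and
   joining a, b, c inside X to a common vertex gives a subdivision of K4. *)

Section Walks.
Variables (T : finType) (e : rel T).
Hypothesis esym : symmetric e.
Implicit Types (x y u w : T) (p : seq T) (S A : {set T}).

Lemma path_rev_sym x p y : path e x (rcons p y) -> path e y (rcons (rev p) x).
Proof.
move=> pxy; have : path (fun z => e^~ z) x (rcons p y).
  by rewrite (eq_path (e' := e)) // => u w; rewrite esym.
by rewrite -rev_path belast_rcons last_rcons rev_cons.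
Qed.

Lemma induced_sym S : symmetric (induced e S).
Proof. by move=> x y; rewrite /induced esym andbCA. Qed.

Lemma path_induced S x p : path (induced e S) x p -> path e x p /\ {subset p <= S}.
Proof.
elim: p x => [|h p IH] x //= /andP[/and3P[_ hS exh] /IH[hp sub]].
split; first by rewrite exh.
by move=> v; rewrite inE => /orP[/eqP->|/sub].
Qed.

Lemma connect_induced_exit S A x y :
  connect (induced e S) x y -> x \in A -> y \notin A ->
  exists u w, [/\ u \in A, w \notin A, w \in S & e u w].
Proof.
case/connectP=> p + ->; elim: p x => [|h p IH] x /=; first by move=> _ ->.
case/andP=> /and3P[_ hS exh] hp xA.
case hA: (h \in A); first exact: IH hp hA.
by move=> _; exists x, h; rewrite hA.
Qed.

Lemma connect_induced_uniq_path S u w : connect (induced e S) u w ->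
  exists p, [/\ path e u p, last u p = w, uniq (u :: p) & {subset p <= S}].
Proof.
case/connectP=> p hp ->; case: (shortenP hp) => p' hp' up' _.
by have [] := path_induced hp'; exists p'.
Qed.

Lemma components_sub S C u : C \in components e S -> u \in C -> u \in S.
Proof. by case/imsetP=> x _ ->; rewrite inE => /andP[]. Qed.

Lemma components_closed S C u w :
  C \in components e S -> u \in C -> w \in S -> e u w -> w \in C.
Proof.
case/imsetP=> x _ ->; rewrite !inE => /andP[uS xu] wS euw.
by rewrite wS (connect_trans xu) // connect1 // /induced uS wS.
Qed.

Lemma components_neq0 S C : C \in components e S -> exists x, x \in C.
Proof. by case/imsetP=> x xS ->; exists x; rewrite inE xS connect0. Qed.

Lemma components_connect S C u w : C \in components e S ->
  u \in C -> w \in C -> connect (induced e C) u w.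
Proof.
move=> CS; have stay x y : x \in C -> connect (induced e S) x y ->
    connect (induced e C) x y.
  move=> + /connectP[p + ->]; elim: p x => [|h p IH] x xC /=.
    by rewrite connect0.
  case/andP=> xh hp.
  case/and3P: xh => _ hS exh.
  have hC : h \in C by exact: components_closed CS xC hS exh.
  by apply: connect_trans (IH h hC hp); rewrite connect1 // /induced xC hC.
have symS := sym_connect_sym (induced_sym S).
have symC := sym_connect_sym (induced_sym C).
case/imsetP: CS stay symC => x xS -> stay symC uC wC.
have xC : x \in compo e S x by rewrite inE xS connect0.
move: uC wC; rewrite !inE => /andP[_ /(stay _ _ xC) xu] /andP[_ /(stay _ _ xC) xw].
by rewrite symC in xu; apply: connect_trans xu xw.
Qed.

Lemma components_disjoint S C C' u : C \in components e S ->
  C' \in components e S -> C != C' -> u \in C -> u \notin C'.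
Proof.
move=> CS C'S + uC; apply: contraNN => uC'; apply/eqP.
case/imsetP: CS uC => x _ ->; case/imsetP: C'S uC' => y _ ->.
rewrite !inE => /andP[_ yu] /andP[_ xu].
have symS := sym_connect_sym (induced_sym S).
apply/setP => z; rewrite !inE; congr (_ && _); apply/idP/idP.
  by move=> xz; apply: connect_trans xz; rewrite (connect_trans yu) // symS.
by move=> yz; apply: connect_trans yz; rewrite (connect_trans xu) // symS.
Qed.

End Walks.

Section SeqPieces.
Variable T : eqType.
Implicit Types (s W : seq T) (ss : seq (seq T)).

Lemma mem_nth_flatten ss i y : y \in nth [::] ss i -> y \in flatten ss.
Proof.
case: (ltnP i (size ss)) => [lt_i_ss yi|le_ss_i]; last by rewrite nth_default.
by apply/flattenP; exists (nth [::] ss i); rewrite ?mem_nth.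
Qed.

Lemma uniq_flatten_nth ss i : uniq (flatten ss) -> uniq (nth [::] ss i).
Proof.
elim: ss i => [|s ss IH] [|i] //=; rewrite cat_uniq => /and3P[us _ uss] //.
exact: IH.
Qed.

Lemma flatten_nth_disjoint ss i j y : uniq (flatten ss) -> i != j ->
  y \in nth [::] ss i -> y \notin nth [::] ss j.
Proof.
elim: ss i j => [|s ss IH] [|i] [|j] //=; rewrite cat_uniq => /and3P[_ dis uss] ij.
- move=> ys; apply/negP => /mem_nth_flatten yss.
  by case/negP: dis; apply/hasP; exists y.
- move=> /mem_nth_flatten yss; apply/negP => ys.
  by case/negP: dis; apply/hasP; exists y.
- exact: IH.
Qed.

Lemma filter_cons_split (P : pred T) W a r : filter P W = a :: r ->
  exists W0 W1, [/\ P a, W = W0 ++ a :: W1 & filter P W1 = r].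
Proof.
elim: W => //= y W IH; case: ifP => [Py [<- <-]|_ /IH[W0 [W1 [Pa -> fW1]]]].
  by exists [::], W.
by exists (y :: W0), W1.
Qed.

End SeqPieces.

Lemma split3_of_card (T : finType) (W : seq T) (N : {set T}) :
  uniq W -> {subset N <= W} -> 2 < #|N| ->
  exists a b c W0 A B D,
    [/\ a \in N, b \in N, c \in N & W = W0 ++ a :: A ++ b :: B ++ c :: D].
Proof.
move=> uW NW N3; have : 2 < size (filter (mem N) W).
  rewrite -(card_uniqP (filter_uniq _ uW)) (leq_trans N3) //.
  by apply/subset_leq_card/subsetP => v vN; rewrite mem_filter (NW _ vN) andbT.
case fW: (filter _ W) => [|a [|b [|c r]]] // _.
have [W0 [W1 [aN -> /filter_cons_split[A [W2 [bN -> /filter_cons_split]]]]]] :=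
  filter_cons_split fW.
case=> [B [D [cN -> _]]].
by exists a, b, c, W0, A, B, D.
Qed.

Section K4Subdivision.
Variables (T : finType) (e : rel T).
Hypothesis esym : symmetric e.

Lemma simple_path_intP x y P : uniq P -> x \notin P -> y \notin P -> x != y ->
  path e x (rcons P y) -> simple_path_int e x y P.
Proof.
move=> uP xP yP xy pxy; rewrite /simple_path_int pxy /= rcons_uniq yP uP.
by rewrite mem_rcons inE negb_or xy xP.
Qed.

Lemma cycle_split3 a b c A B D : cycle e (a :: A ++ b :: B ++ c :: D) ->
  [/\ path e a (rcons A b), path e b (rcons B c) & path e c (rcons D a)].
Proof.
rewrite /= rcons_cat /= -cat_rcons cat_path last_rcons => /andP[-> /=].
by rewrite rcons_cat /= -cat_rcons cat_path last_rcons => /andP[-> ->].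
Qed.

Lemma K4_subdivision_of_cycle_tripod a b c x A B D L1 L2 L3 :
  cycle e (a :: A ++ b :: B ++ c :: D) ->
  uniq ((a :: A ++ b :: B ++ c :: D) ++ L1 ++ L2 ++ L3 ++ [:: x]) ->
  path e a (rcons L1 x) -> path e b (rcons L2 x) -> path e c (rcons L3 x) ->
  has_K4_subdivision e.
Proof.
move=> /cycle_split3[pab pbc pca] uZ pa pb pc.
pose ss := [:: [:: a]; A; [:: b]; B; [:: c]; D; L1; L2; L3; [:: x]].
have uss : uniq (flatten ss) by move: uZ; rewrite /= -!catA /= -!catA.
(* Branch vertex u lies in piece [bp u] of [ss]; the internal vertices of the
   path between branch vertices u < v form piece [sp u v], traversed backwards
   for (u, v) = (0, 2). *)
pose bp (u : nat) := nth 0 [:: 0; 2; 4; 9] u.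
pose sp (u v : nat) := match u, v with
  | 0, 1 => 1 | 1, 2 => 3 | 0, 2 => 5 | 0, 3 => 6 | 1, 3 => 7 | _, _ => 8 end.
pose f (u : 'I_4) := nth x [:: a; b; c] u.
pose P (u v : 'I_4) := if (u == 0 :> nat) && (v == 2 :> nat) then rev D
                       else nth [::] ss (sp u v).
have dis i j w : i != j -> w \in nth [::] ss i -> w \notin nth [::] ss j.
  exact: flatten_nth_disjoint.
have fP (u : 'I_4) : f u \in nth [::] ss (bp u).
  by case: u => [[|[|[|[|?]]]] ?]; rewrite //= inE.
have PP (u v : 'I_4) w : (w \in P u v) = (w \in nth [::] ss (sp u v)).
  by rewrite /P; case: ifP => [/andP[/eqP-> /eqP->]|]; rewrite ?mem_rev.
have uP (u v : 'I_4) : uniq (P u v).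
  rewrite /P; case: ifP => _; last exact: uniq_flatten_nth.
  by rewrite rev_uniq (uniq_flatten_nth 5 uss).
have bp_inj (u v : 'I_4) : u != v -> bp u != bp v.
  by case: u v => [[|[|[|[|?]]]] ?] [[|[|[|[|?]]]] ?].
have bp_sp (u v w : 'I_4) : bp w != sp u v.
  by case: u v w => [[|[|[|[|?]]]] ?] [[|[|[|[|?]]]] ?] [[|[|[|[|?]]]] ?].
have sp_inj (u v u' v' : 'I_4) : u < v -> u' < v' -> (u, v) <> (u', v') ->
    sp u v != sp u' v'.
  case: u v u' v' => [[|[|[|[|?]]]] ?] [[|[|[|[|?]]]] ?]
                     [[|[|[|[|?]]]] ?] [[|[|[|[|?]]]] ?] //= => _ _ [];
  by congr pair; apply: val_inj.
have pP (u v : 'I_4) : u < v -> path e (f u) (rcons (P u v) (f v)).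
  case: u v => [[|[|[|[|?]]]] ?] [[|[|[|[|?]]]] ?] //= _.
  exact: path_rev_sym.
have f_inj : injective f.
  move=> u v fuv; apply/eqP; apply: contraT => /bp_inj neq.
  by have := dis _ _ _ neq (fP u); rewrite fuv fP.
exists f, P; split; first exact: f_inj.
split; last split.
- move=> u v uv; apply: simple_path_intP (uP u v) _ _ _ (pP u v uv).
  + by rewrite PP (dis _ _ _ (bp_sp u v u) (fP u)).
  + by rewrite PP (dis _ _ _ (bp_sp u v v) (fP v)).
  + by apply: contraTneq uv => /f_inj ->; rewrite ltnn.
- by move=> u v w _; rewrite PP (dis _ _ _ (bp_sp u v w) (fP w)).
- move=> u v u' v' uv u'v' neq w; rewrite !PP.
  exact: dis (sp_inj _ _ _ _ uv u'v' neq).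
Qed.

Lemma tripod a b c U V : path e a (rcons U b) -> path e c V ->
  uniq U -> uniq V -> has (mem U) V ->
  exists x L1 L2 L3, [/\ uniq (L1 ++ L2 ++ L3 ++ [:: x]),
    {subset L1 ++ L2 ++ L3 ++ [:: x] <= U ++ V},
    path e a (rcons L1 x), path e b (rcons L2 x) & path e c (rcons L3 x)].
Proof.
move=> pU pV uU uV hUV; case/split_find: hUV pV uV => x V1 V2 xU V1U pV uV.
case/splitPr: xU pU uU V1U => U1 U2 pU uU V1U.
move: pU; rewrite rcons_cat /= -cat_rcons cat_path last_rcons => /andP[pa pxb].
move: uV; rewrite cat_uniq rcons_uniq => /andP[/andP[_ uV1] _].
exists x, U1, (rev U2), V1; split.
- have perm : perm_eq (U1 ++ rev U2 ++ V1 ++ [:: x]) ((U1 ++ x :: U2) ++ V1).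
    apply/permP => p; rewrite !count_cat /= count_rev addn0.
    by rewrite -!addnA [p x + _]addnC -addnA.
  by rewrite (perm_uniq perm) cat_uniq uU uV1 V1U.
- move=> v; rewrite !mem_cat mem_rev inE => /or4P[|||/eqP->].
  + by move=> vU1; rewrite vU1.
  + by move=> vU2; rewrite inE vU2 !orbT.
  + by move=> vV1; rewrite mem_rcons inE vV1 !orbT.
  + by rewrite inE eqxx orbT.
- exact: pa.
- exact: path_rev_sym pxb.
- by move: pV; rewrite cat_path => /andP[].
Qed.

End K4Subdivision.

Section Attachments.
Variables (T : finType) (e : rel T).
Hypotheses (esym : symmetric e) (Hbi : biconnected e).
Variables (s t : T) (C C' : {set T}) (q : seq T).
Hypotheses (Hst : s != t) (Hq : st_path_in e s t C q).
Hypotheses (HC : C \in components e (~: [set s; t]))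
           (HC' : C' \in components e (~: [set s; t])) (HCC' : C != C').

Let W := s :: q.

Lemma path_W : path e s q.
Proof. by case/and3P: Hq => /path_induced[]. Qed.

Lemma last_W : last s q = t.
Proof. by case/and3P: Hq => _ /eqP. Qed.

Lemma uniq_W : uniq W.
Proof. by case/and3P: Hq. Qed.

Lemma mem_t_W : t \in W.
Proof. by rewrite -last_W mem_last. Qed.

Lemma W_sub v : v \in W -> v \in C :|: [set s; t].
Proof.
rewrite inE => /predU1P[->|]; first by rewrite !inE eqxx orbT.
by case/and3P: Hq => /path_induced[_ sub] _ _ /sub.
Qed.

Lemma W_notin_other v : v \in W -> v \notin C'.
Proof.
move/W_sub; rewrite inE => /orP[vC|vst].
  exact: (components_disjoint esym HC HC' HCC' vC).
by apply: contraTN vst => /(components_sub HC'); rewrite inE.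
Qed.

Lemma other_component_adj z z' : [set z; z'] = [set s; t] -> z != z' ->
  exists2 u, u \in C' & e u z.
Proof.
move=> zz' neq; have [y0 y0C'] := components_neq0 HC'.
have y0st : y0 \notin [set s; t] by have := components_sub HC' y0C'; rewrite inE.
have y0z' : y0 != z' by apply: contraNneq y0st => ->; rewrite -zz' set22.
have := Hbi.2.2 z' y0 z; rewrite !inE y0z' neq => /(_ isT isT) y0z.
have zC' : z \notin C'.
  by apply: contraTN (set21 z z') => /(components_sub HC'); rewrite zz' inE.
have [u [w [uC' wC' + euw]]] := connect_induced_exit y0z y0C' zC'.
rewrite !inE => wz'; exists u => //.
have : w \in [set s; t].
  by apply: contraNT wC' => wst; apply: (components_closed HC' uC') euw; rewrite inE.
by rewrite -zz' !inE (negbTE wz') orbF => /eqP <-.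
Qed.

Lemma st_path_through_other :
  exists E, [/\ path e t (rcons E s), uniq E & {subset E <= C'}].
Proof.
have [ut utC' eut] : exists2 u, u \in C' & e u t.
  by apply: (other_component_adj (setUC _ _)); rewrite eq_sym.
have [us usC' eus] := other_component_adj (erefl _) Hst.
have [p [pu lp up sub]] :=
  connect_induced_uniq_path (components_connect esym HC' utC' usC').
exists (ut :: p); split => //.
  by rewrite /= rcons_path pu lp [e t _]esym eut eus.
by move=> v; rewrite inE => /predU1P[->|/sub].
Qed.

(* D' = D ++ E ++ W0 with E a t-s path through C'. *)
Lemma cycle_through_other W0 a A b B c D :
  W = W0 ++ a :: A ++ b :: B ++ c :: D ->
  exists D', let Z := a :: A ++ b :: B ++ c :: D' in
    [/\ cycle e Z, uniq Z & forall v, v \in Z -> (v \in W) || (v \in C')].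
Proof.
move=> hW; have [E [pE uE sE]] := st_path_through_other.
have rotZ : rot (size W0) (W ++ E) = a :: A ++ b :: B ++ c :: D ++ E ++ W0.
  by rewrite hW -catA rot_size_cat /= -!catA /= -!catA.
exists (D ++ E ++ W0) => Z; rewrite {}/Z -rotZ rot_cycle rot_uniq; split.
- by rewrite /= rcons_cat cat_path path_W last_W.
- rewrite cat_uniq uniq_W uE andbT; apply/hasPn => v /sE vC'.
  by apply: contraTN vC' => /W_notin_other.
- by move=> v; rewrite mem_rot mem_cat => /orP[->|/sE ->]; rewrite ?orbT.
Qed.

Section Component.
Variable X : {set T}.
Hypothesis HX : X \in components e (C :\: [set x | x \in s :: q]).

Let N := [set v | (v \in W) && [exists u in X, e u v]].

Lemma X_sub u : u \in X -> u \in C /\ u \notin W.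
Proof. by move=> /(components_sub HX); rewrite !inE => /andP[-> ->]. Qed.

Lemma attachment_of_edge u w : u \in X -> e u w -> w \notin X -> w \in N.
Proof.
move=> uX euw wX; rewrite inE andbC; apply/andP; split.
  by apply/existsP; exists u; rewrite uX.
apply: contraNT wX => wW; have [uC _] := X_sub uX.
have wC : w \in C.
  apply: (components_closed HC uC) euw; rewrite !inE negb_or.
  by apply/andP; split; apply: contraNneq wW => ->; rewrite ?mem_head ?mem_t_W.
by apply: (components_closed HX uX) euw; rewrite !inE wW wC.
Qed.

Lemma two_le_card_attachments : 1 < #|N|.
Proof.
rewrite ltnNge; apply/negP => N_le1.
have [x0 x0X] := components_neq0 HX.
have [v vW Nv] : exists2 v, v \in W & N \subset [set v].
  case: (set_0Vmem N) => [->|[v vN]]; first by exists s; rewrite ?mem_head ?sub0set.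
  exists v; first by move: vN; rewrite inE => /andP[].
  move/card_le1P: N_le1 => /(_ v vN) Nv.
  by apply/subsetP => w; rewrite Nv !inE.
have [y yW yv] : exists2 y, y \in W & y != v.
  case: (v =P s) => [->|/eqP vs]; first by exists t; rewrite 1?eq_sym ?mem_t_W.
  by exists s; rewrite 1?eq_sym ?mem_head.
have x0v : x0 != v by apply: contraTneq vW => <-; have [] := X_sub x0X.
have yX : y \notin X by apply: contraTN yW => /X_sub[].
have := (Hbi.2.2 v x0 y); rewrite !inE x0v yv => /(_ isT isT) x0y.
have [u [w [uX wX + euw]]] := connect_induced_exit x0y x0X yX.
rewrite !inE => /negP[]; apply/eqP.
by move/subsetP: Nv => /(_ w (attachment_of_edge uX euw wX)); rewrite inE => /eqP.
Qed.

Lemma tripod_in_component a b c : a \in N -> b \in N -> c \in N ->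
  exists x L1 L2 L3, [/\ uniq (L1 ++ L2 ++ L3 ++ [:: x]),
    {subset L1 ++ L2 ++ L3 ++ [:: x] <= X},
    path e a (rcons L1 x), path e b (rcons L2 x) & path e c (rcons L3 x)].
Proof.
have nbr v : v \in N -> exists2 u, u \in X & e v u.
  by rewrite inE => /andP[_ /existsP[u /andP[uX euv]]]; exists u; rewrite // esym.
move=> /nbr[ua uaX eua] /nbr[ub ubX eub] /nbr[uc ucX euc].
have [U [pU lU uU sU]] :=
  connect_induced_uniq_path (components_connect esym HX uaX ubX).
have [V [pV lV uV sV]] :=
  connect_induced_uniq_path (components_connect esym HX ucX uaX).
have pab : path e a (rcons (ua :: U) b) by rewrite /= eua rcons_path pU lU esym.
have pcV : path e c (uc :: V) by rewrite /= euc.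
have UV : has (mem (ua :: U)) (uc :: V).
  by apply/hasP; exists ua; [rewrite -lV mem_last | exact: mem_head].
have [x [L1 [L2 [L3 [uL sL pa pb pc]]]]] := tripod esym pab pcV uU uV UV.
exists x, L1, L2, L3; split=> // v /sL.
by rewrite mem_cat !inE => /orP[/predU1P[->|/sU]|/predU1P[->|/sV]].
Qed.

Lemma card_attachments_le2 : ~ has_K4_subdivision e -> #|N| <= 2.
Proof.
move=> noK4; rewrite leqNgt; apply/negP => N3; apply: noK4.
have NW : {subset N <= W} by move=> v; rewrite inE => /andP[].
have [a [b [c [W0 [A [B [D [aN bN cN hW]]]]]]]] := split3_of_card uniq_W NW N3.
have [D' [cycZ uZ sZ]] := cycle_through_other hW.
have [x [L1 [L2 [L3 [uL LX pa pb pc]]]]] := tripod_in_component aN bN cN.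
apply: (K4_subdivision_of_cycle_tripod esym cycZ _ pa pb pc).
rewrite cat_uniq uZ uL andbT; apply/hasPn => v /LX vX; have [vC vW] := X_sub vX.
apply: contraTN vC => /sZ /orP[vW'|vC']; first by rewrite vW' in vW.
by apply: (components_disjoint esym HC' HC _ vC'); rewrite eq_sym.
Qed.

End Component.

Lemma attach_two_of_st_path : ~ has_K4_subdivision e -> attach_two e s C q.
Proof.
move=> noK4 X HX; apply/eqP.
by rewrite eqn_leq card_attachments_le2 // two_le_card_attachments.
Qed.

End Attachments.

Theorem claim2 (T : finType) (e : rel T)
  (Hsimple : simple_graph e)
  (Hsp : series_parallel e)
  (Hnotr : no_transitive_edges e)
  (Hle2 : forall s t, separation_pair e s t -> nheavy e s t <= 2)
  (s t : T) (Hst : separation_pair e s t)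
  (Hmax : forall s' t', separation_pair e s' t' -> nheavy e s' t' <= nheavy e s t)
  (C1 C2 : {set T})
  (HC1 : C1 \in components e (~: [set s; t]))
  (HC2 : C2 \in components e (~: [set s; t]))
  (HC12 : C1 != C2)
  (Hheavy1 : 1 <= nheavy e s t -> heavy e s t C1)
  (Hheavy2 : nheavy e s t = 2 -> heavy e s t C2)
  (p1 p2 : seq T)
  (Hp1 : longest_st_path e s t C1 p1)
  (Hp2 : longest_st_path e s t C2 p2) :
  attach_two e s C1 p1 /\ attach_two e s C2 p2.
Proof.
have [esym _] := Hsimple; have [Hbi noK4] := Hsp; have [st _] := Hst.
have HC21 : C2 != C1 by rewrite eq_sym.
split.
- exact: (attach_two_of_st_path esym Hbi st Hp1.1 HC1 HC2 HC12 noK4).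
- exact: (attach_two_of_st_path esym Hbi st Hp2.1 HC2 HC1 HC21 noK4).
Qed.
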